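(* Let $d\ge 1$ and let $(D,\mathbf{m},E)\in\mathbb{R}\times\mathbb{R}^d\times\mathbb{R}$ satisfy $D>0$ and $E-\sqrt{D^2+|\mathbf{m}|^2}>0$ (in particular $E>|\mathbf{m}|$). For $h>1$ define \[ T(h)=\frac{3h-8}{24}+\frac{\sqrt{(3h+8)^2-96}}{24}, \] and for $\Pi\ge E$ define \[ h(\Pi)=\frac{\sqrt{\Pi^2-|\mathbf{m}|^2}}{D},\qquad S(\Pi)=\Pi^2-\Pi E-D^2\,h(\Pi)\,T\big(h(\Pi)\big). \] Then $S$ has exactly one real root in the open interval $(E,\infty)$.
   Context: This arises for the relativistic hydrodynamics equations closed by the equation of state $h=\frac{2(6p^2+4p\rho+\rho^2)}{\rho(3p+2\rho)}$ (RC-EOS), relating specific enthalpy $h$, pressure $p$ and rest-mass density $\rho$; solving this for $p>0$ gives $p=\rho\,T(h)$. Here $D$ is the relativistic density, $\mathbf{m}$ the momentum density, $E$ the energy density, and $\Pi=E+p$. For $\Pi\ge E$ one has $h(\Pi)>1$, so $S$ is well defined there. *)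

From Stdlib Require Import Reals List.
Open Scope R_scope.

(* A vector of R^d is represented as a list of reals of length d. *)
Definition norm2 (m : list R) : R := fold_right (fun x acc => x ^ 2 + acc) 0 m.
Definition vnorm (m : list R) : R := sqrt (norm2 m).

Definition Tfun (h : R) : R := (3 * h - 8) / 24 + sqrt ((3 * h + 8) ^ 2 - 96) / 24.

Definition hfun (D : R) (m : list R) (Pi : R) : R := sqrt (Pi ^ 2 - vnorm m ^ 2) / D.

Definition Sfun (D : R) (m : list R) (E Pi : R) : R :=
  Pi ^ 2 - Pi * E - D ^ 2 * hfun D m Pi * Tfun (hfun D m Pi).

(* Writing h T(h) = h^2/4 + g(h), the identity (s - 3h - 8)(s + 3h + 8) = -96 for
   s = sqrt((3h+8)^2 - 96) gives g(h) = -4h/(s + 3h + 8) <= 0, and g is nonincreasing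
   on [1, oo).  Since D^2 h(Pi)^2 = Pi^2 - |m|^2, this turns S into
   3 Pi^2/4 - Pi E + |m|^2/4 - D^2 g(h(Pi)), a strictly increasing function on [E, oo).
   Finally S(E) = -D^2 h T(h) < 0 and S(2E) >= E^2 > 0, and the intermediate value
   theorem provides the root. *)
From Stdlib Require Import Reals List Lra Psatz Ranalysis5.
From Coquelicot Require Import Coquelicot.
Open Scope R_scope.

Lemma unique_root_of_increasing (f : R -> R) (a b : R) :
  a < b -> (forall x, a <= x <= b -> continuity_pt f x) ->
  f a < 0 -> 0 < f b -> (forall x y, a <= x -> x < y -> f x < f y) ->
  exists! x, a < x /\ f x = 0.
Proof.
intros Hab Hcont Ha Hb Hincr.
destruct (IVT_interv f a b Hcont Hab Ha Hb) as [z [[Haz _] Hz]].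
assert (Haz' : a < z) by (destruct Haz as [|<-]; lra).
exists z; split; [split; assumption|].
intros w [Haw Hw].
destruct (Rtotal_order z w) as [Hzw|[Hzw|Hwz]]; [| exact Hzw |].
- pose proof (Hincr z w (Rlt_le _ _ Haz') Hzw); lra.
- pose proof (Hincr w z (Rlt_le _ _ Haw) Hwz); lra.
Qed.

Lemma Tfun_sqrt_spec h : 1 <= h ->
  sqrt ((3 * h + 8) ^ 2 - 96) ^ 2 = (3 * h + 8) ^ 2 - 96 /\
  5 <= sqrt ((3 * h + 8) ^ 2 - 96).
Proof.
intros Hh.
assert (H25 : 5 ^ 2 <= (3 * h + 8) ^ 2 - 96) by nra.
split.
- apply pow2_sqrt; lra.
- rewrite <- (sqrt_pow2 5) by lra. apply sqrt_le_1_alt; exact H25.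
Qed.

Lemma Tfun_gt0 h : 1 < h -> 0 < Tfun h.
Proof.
intros Hh. destruct (Tfun_sqrt_spec h (Rlt_le _ _ Hh)) as [Hs2 Hs5].
unfold Tfun. set (s := sqrt _) in *.
assert (8 - 3 * h < s) by nra.
lra.
Qed.

Lemma Tfun_le_quarter h : 1 <= h -> Tfun h <= h / 4.
Proof.
intros Hh. destruct (Tfun_sqrt_spec h Hh) as [Hs2 Hs5].
unfold Tfun. set (s := sqrt _) in *.
assert (s <= 3 * h + 8) by nra.
lra.
Qed.

Lemma Tfun_excess_mul h : 1 <= h ->
  (h * Tfun h - h ^ 2 / 4) * (sqrt ((3 * h + 8) ^ 2 - 96) + 3 * h + 8) = - 4 * h.
Proof.
intros Hh. destruct (Tfun_sqrt_spec h Hh) as [Hs2 _].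
unfold Tfun. set (s := sqrt _) in *.
replace ((h * ((3 * h - 8) / 24 + s / 24) - h ^ 2 / 4) * (s + 3 * h + 8))
  with (h * (s ^ 2 - (3 * h + 8) ^ 2) / 24) by field.
rewrite Hs2. field.
Qed.

Lemma Tfun_sqrt_cross_le x y : 1 <= x -> x <= y ->
  x * sqrt ((3 * y + 8) ^ 2 - 96) - y * sqrt ((3 * x + 8) ^ 2 - 96) <= 8 * (y - x).
Proof.
intros Hx Hxy.
destruct (Tfun_sqrt_spec x Hx) as [Hsx2 Hsx5].
destruct (Tfun_sqrt_spec y ltac:(lra)) as [Hsy2 Hsy5].
set (sx := sqrt ((3 * x + 8) ^ 2 - 96)) in *.
set (sy := sqrt ((3 * y + 8) ^ 2 - 96)) in *.
set (P := x * sy + y * sx).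
assert (HP : 5 * (x + y) <= P) by (unfold P; nra).
assert (Hprod : (x * sy - y * sx) * P = (y - x) * (32 * (x + y) - 48 * x * y)).
{ unfold P. replace ((x * sy - y * sx) * (x * sy + y * sx))
    with (x ^ 2 * sy ^ 2 - y ^ 2 * sx ^ 2) by ring.
  rewrite Hsx2, Hsy2. ring. }
(* (x - 1)(y - 1) >= 0 gives 48 x y >= 24 (x + y). *)
assert (Hfactor : 32 * (x + y) - 48 * x * y <= 8 * P) by nra.
assert (Hbound : (x * sy - y * sx) * P <= (y - x) * (8 * P)).
{ rewrite Hprod. apply Rmult_le_compat_l; lra. }
apply (Rmult_le_reg_r P); nra.
Qed.

Lemma Tfun_excess_nonincreasing x y : 1 <= x -> x <= y ->
  y * Tfun y - y ^ 2 / 4 <= x * Tfun x - x ^ 2 / 4.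
Proof.
intros Hx Hxy.
pose proof (Tfun_excess_mul x Hx) as Hgx.
pose proof (Tfun_excess_mul y ltac:(lra)) as Hgy.
pose proof (Tfun_sqrt_cross_le x y Hx Hxy) as Hcross.
destruct (Tfun_sqrt_spec x Hx) as [_ Hsx5].
destruct (Tfun_sqrt_spec y ltac:(lra)) as [_ Hsy5].
set (sx := sqrt ((3 * x + 8) ^ 2 - 96)) in *.
set (sy := sqrt ((3 * y + 8) ^ 2 - 96)) in *.
set (gx := x * Tfun x - x ^ 2 / 4) in *.
set (gy := y * Tfun y - y ^ 2 / 4) in *.
apply (Rmult_le_reg_r ((sx + 3 * x + 8) * (sy + 3 * y + 8))); [nra|].
replace (gy * ((sx + 3 * x + 8) * (sy + 3 * y + 8))) with (- 4 * y * (sx + 3 * x + 8))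
  by (rewrite <- Hgy; ring).
replace (gx * ((sx + 3 * x + 8) * (sy + 3 * y + 8))) with (- 4 * x * (sy + 3 * y + 8))
  by (rewrite <- Hgx; ring).
nra.
Qed.

Lemma hfun_gt1 D m Pi : 0 < D -> D ^ 2 + vnorm m ^ 2 < Pi ^ 2 -> 1 < hfun D m Pi.
Proof.
intros HD HPi. unfold hfun.
apply (Rmult_lt_reg_r D); [exact HD|].
unfold Rdiv. rewrite Rmult_assoc, Rinv_l, Rmult_1_l, Rmult_1_r by lra.
rewrite <- (sqrt_pow2 D) by lra.
apply sqrt_lt_1_alt; nra.
Qed.

Lemma hfun_sqr D m Pi : 0 < D -> vnorm m ^ 2 <= Pi ^ 2 ->
  D ^ 2 * hfun D m Pi ^ 2 = Pi ^ 2 - vnorm m ^ 2.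
Proof.
intros HD HPi. unfold hfun, Rdiv.
rewrite Rpow_mult_distr, pow2_sqrt by lra.
field. lra.
Qed.

Lemma hfun_le_compat D m a b : 0 < D -> vnorm m ^ 2 <= a ^ 2 -> 0 <= a <= b ->
  hfun D m a <= hfun D m b.
Proof.
intros HD Ha Hab. unfold hfun, Rdiv.
apply Rmult_le_compat_r; [left; apply Rinv_0_lt_compat; exact HD|].
apply sqrt_le_1_alt; nra.
Qed.

Lemma Sfun_decomp D m E Pi : 0 < D -> vnorm m ^ 2 <= Pi ^ 2 ->
  Sfun D m E Pi = 3 / 4 * Pi ^ 2 - Pi * E + vnorm m ^ 2 / 4
    - D ^ 2 * (hfun D m Pi * Tfun (hfun D m Pi) - hfun D m Pi ^ 2 / 4).
Proof.
intros HD HPi. pose proof (hfun_sqr D m Pi HD HPi) as Hh.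
unfold Sfun. nra.
Qed.

Section SfunRoot.

Variables (D E : R) (m : list R).
Hypotheses (HD : 0 < D) (HE : 0 < E) (HDE : D ^ 2 + vnorm m ^ 2 < E ^ 2).

Let admissible Pi : E <= Pi -> D ^ 2 + vnorm m ^ 2 < Pi ^ 2.
Proof. intros HPi. nra. Qed.

Lemma Sfun_at_E_lt0 : Sfun D m E E < 0.
Proof.
pose proof (hfun_gt1 D m E HD HDE) as Hh.
pose proof (Tfun_gt0 _ Hh) as HT.
unfold Sfun.
assert (0 < D ^ 2 * hfun D m E * Tfun (hfun D m E)).
{ apply Rmult_lt_0_compat; [apply Rmult_lt_0_compat; nra | exact HT]. }
lra.
Qed.

Lemma Sfun_at_2E_gt0 : 0 < Sfun D m E (2 * E).
Proof.
assert (H2E : D ^ 2 + vnorm m ^ 2 < (2 * E) ^ 2) by (apply admissible; lra).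
pose proof (hfun_gt1 D m (2 * E) HD H2E) as Hh.
pose proof (Tfun_le_quarter _ (Rlt_le _ _ Hh)) as HT.
rewrite (Sfun_decomp D m E (2 * E) HD) by nra.
set (h := hfun D m (2 * E)) in *.
assert (h * Tfun h - h ^ 2 / 4 <= 0) by nra.
nra.
Qed.

Lemma Sfun_increasing a b : E <= a -> a < b -> Sfun D m E a < Sfun D m E b.
Proof.
intros Ha Hab.
pose proof (admissible a Ha) as Hadm.
rewrite (Sfun_decomp D m E a HD), (Sfun_decomp D m E b HD) by nra.
pose proof (hfun_gt1 D m a HD Hadm) as Hha.
pose proof (hfun_le_compat D m a b HD ltac:(nra) ltac:(lra)) as Hhab.
pose proof (Tfun_excess_nonincreasing _ _ (Rlt_le _ _ Hha) Hhab) as Hg.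
assert (0 < D ^ 2) by nra.
nra.
Qed.

Lemma Sfun_continuous Pi : E <= Pi -> continuity_pt (Sfun D m E) Pi.
Proof.
intros HPi.
pose proof (admissible Pi HPi) as Hadm.
pose proof (hfun_gt1 D m Pi HD Hadm) as Hh.
assert (Hder : ex_derive (Sfun D m E) Pi).
{ unfold Sfun, hfun, Tfun in *.
  auto_derive.
  replace (Pi * (Pi * 1) + - (vnorm m * (vnorm m * 1))) with (Pi ^ 2 - vnorm m ^ 2) by ring.
  unfold Rdiv in Hh. repeat split; nra. }
apply continuity_pt_filterlim. exact (ex_derive_continuous _ _ Hder).
Qed.

End SfunRoot.

Theorem lemma1 (d : nat) (D : R) (m : list R) (E : R) :
  (1 <= d)%nat -> length m = d ->
  0 < D -> E - sqrt (D ^ 2 + vnorm m ^ 2) > 0 ->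
  exists! Pi : R, E < Pi /\ Sfun D m E Pi = 0.
Proof.
intros _ _ HD HE.
pose proof (sqrt_pos (D ^ 2 + vnorm m ^ 2)) as Hs0.
assert (Hs2 : sqrt (D ^ 2 + vnorm m ^ 2) ^ 2 = D ^ 2 + vnorm m ^ 2)
  by (apply pow2_sqrt; nra).
assert (HE0 : 0 < E) by lra.
assert (HDE : D ^ 2 + vnorm m ^ 2 < E ^ 2) by nra.
apply unique_root_of_increasing with (b := 2 * E).
- lra.
- intros Pi [HPi _]. exact (Sfun_continuous D E m HD HE0 HDE Pi HPi).
- exact (Sfun_at_E_lt0 D E m HD HDE).
- exact (Sfun_at_2E_gt0 D E m HD HE0 HDE).
- exact (Sfun_increasing D E m HD HE0 HDE).
Qed.
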